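(* Let $\mathcal{C}_1$ be an even-like $[n,k_1,d_1]_2$ binary linear code, let $\mathcal{C}_2$ be the $[n,1,n]_2$ repetition code generated by the all-ones vector, and let $\mathcal{C}=\{(\mathbf{u},\mathbf{u}+\mathbf{v}):\mathbf{u}\in\mathcal{C}_1,\mathbf{v}\in\mathcal{C}_2\}$. Then: 1) $\mathcal{C}$ is a $[2n,k_1+1,\min\{2d_1,n\}]_2$ odd-like code if and only if $\mathcal{C}$ is a binary almost Euclidean self-orthogonal code; 2) $\mathcal{C}$ is a $[2n,k_1+1,\min\{2d_1,n\}]_2$ even-like code if and only if $\mathcal{C}$ is a binary Euclidean self-orthogonal code.
   Context: A binary code is even-like if every codeword has even Hamming weight, and odd-like otherwise. For a binary $[N,k,d]_2$ code $\mathcal{C}$, $\mathrm{Hull}_E(\mathcal{C})=\mathcal{C}\cap\mathcal{C}^{\perp_E}$ with $\perp_E$ the dual under $\sum_ix_iy_i$; $\mathcal{C}$ is Euclidean self-orthogonal if $\dim(\mathrm{Hull}_E(\mathcal{C}))=k$ and almost Euclidean self-orthogonal if $\dim(\mathrm{Hull}_E(\mathcal{C}))=k-1$. *)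

From HB Require Import structures.
From mathcomp Require Import all_boot all_order all_algebra.
Set Implicit Arguments. Unset Strict Implicit. Unset Printing Implicit Defensive.
Import GRing.Theory.
Local Open Scope ring_scope.

Definition wt (n : nat) (x : 'rV['F_2]_n) : nat := #|[set i | x 0 i != 0]|.

Definition even_like (n : nat) (C : {vspace 'rV['F_2]_n}) : Prop :=
  forall c, c \in C -> ~~ odd (wt c).
Definition odd_like (n : nat) (C : {vspace 'rV['F_2]_n}) : Prop :=
  ~ even_like C.

Definition min_dist (n : nat) (C : {vspace 'rV['F_2]_n}) (d : nat) : Prop :=
  (exists c, [/\ c \in C, c != 0 & wt c = d]) /\
  (forall c, c \in C -> c != 0 -> (d <= wt c)%N).

Definition is_code (n : nat) (C : {vspace 'rV['F_2]_n}) (k d : nat) : Prop :=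
  \dim C = k /\ min_dist C d.

Definition edot (n : nat) (x y : 'rV['F_2]_n) : 'F_2 := \sum_i x 0 i * y 0 i.

Definition edual (n : nat) (C : {vspace 'rV['F_2]_n}) : {vspace 'rV['F_2]_n} :=
  <<enum [set x : 'rV['F_2]_n | [forall y, (y \in C) ==> (edot x y == 0%R)]]>>%VS.

Definition ehull (n : nat) (C : {vspace 'rV['F_2]_n}) : {vspace 'rV['F_2]_n} :=
  (C :&: edual C)%VS.

Definition self_orth (n : nat) (C : {vspace 'rV['F_2]_n}) : Prop :=
  \dim (ehull C) = \dim C.
Definition almost_self_orth (n : nat) (C : {vspace 'rV['F_2]_n}) : Prop :=
  \dim (ehull C) = (\dim C - 1)%N.

Definition rep_code (n : nat) : {vspace 'rV['F_2]_n} := <[const_mx 1]>%VS.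

From HB Require Import structures.
From mathcomp Require Import all_boot all_order all_algebra.
Set Implicit Arguments. Unset Strict Implicit. Unset Printing Implicit Defensive.
Import GRing.Theory.
Local Open Scope ring_scope.

(* C is the direct sum of the diagonal copy {(u|u) : u in C1} of C1 and the
   line spanned by e = (0|1): hence dim C = k1 + 1, the nonzero words of C
   weigh either 2 wt(u) or n, and C is even-like iff n is even.  As C1 is
   even-like, (u|u) . (u'|u') = 2 u.u' and (u|u) . e = wt(u) both vanish, while
   e . e = n.  So C is self-orthogonal when n is even, and when n is odd its
   hull is exactly the diagonal copy of C1, of codimension one.  Every side of
   both equivalences thus reduces to the parity of n. *)

Section PlotkinSum.
Variables (K : fieldType) (n : nat).

Definition dup_lfun : 'Hom('rV[K]_n, 'rV[K]_(n + n)) :=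
  linfun (mulmxr (row_mx 1%:M 1%:M)).
Definition rshift_lfun : 'Hom('rV[K]_n, 'rV[K]_(n + n)) :=
  linfun (mulmxr (row_mx 0 1%:M)).

Lemma dup_lfunE u : dup_lfun u = row_mx u u.
Proof. by rewrite lfunE /= mul_mx_row mulmx1. Qed.

Lemma rshift_lfunE v : rshift_lfun v = row_mx 0 v.
Proof. by rewrite lfunE /= mul_mx_row mulmx0 mulmx1. Qed.

Variables C1 C2 : {vspace 'rV[K]_n}.

Definition plotkin_sum : {vspace 'rV[K]_(n + n)} :=
  (dup_lfun @: C1 + rshift_lfun @: C2)%VS.

Lemma mem_plotkin_sum w :
  reflect (exists u v, [/\ u \in C1, v \in C2 & w = row_mx u (u + v)])
          (w \in plotkin_sum).
Proof.
apply: (iffP memv_addP) => [|[u [v [C1u C2v ->]]]].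
  case=> _ /memv_imgP[u C1u ->] [_ /memv_imgP[v C2v ->] ->].
  by exists u, v; rewrite dup_lfunE rshift_lfunE add_row_mx addr0.
exists (dup_lfun u); first exact: memv_img.
exists (rshift_lfun v); first exact: memv_img.
by rewrite dup_lfunE rshift_lfunE add_row_mx addr0.
Qed.

Lemma lker_dup_lfun : lker dup_lfun = 0%VS.
Proof.
by apply/eqP/lker0P => u u'; rewrite !dup_lfunE => /eq_row_mx[].
Qed.

Lemma lker_rshift_lfun : lker rshift_lfun = 0%VS.
Proof.
by apply/eqP/lker0P => v v'; rewrite !rshift_lfunE => /eq_row_mx[].
Qed.

Lemma dim_limg_dup (U : {vspace 'rV[K]_n}) : \dim (dup_lfun @: U) = \dim U.
Proof. by rewrite limg_dim_eq // lker_dup_lfun capv0. Qed.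

Lemma dim_plotkin_sum : \dim plotkin_sum = (\dim C1 + \dim C2)%N.
Proof.
rewrite dimv_disjoint_sum; last first.
  apply/eqP; rewrite -subv0; apply/subvP => _ /memv_capP[/memv_imgP[u _ ->]].
  case/memv_imgP=> v _; rewrite dup_lfunE rshift_lfunE => /eq_row_mx[-> _].
  by rewrite row_mx0 mem0v.
by rewrite dim_limg_dup limg_dim_eq // lker_rshift_lfun capv0.
Qed.

End PlotkinSum.

Arguments dup_lfun {K n}.
Arguments rshift_lfun {K n}.

Lemma F2_cases (c : 'F_2) : c = 0 \/ c = 1.
Proof. by case: c => [[|[|m]] //= lt_m2]; [left | right]; apply/val_inj. Qed.

Lemma F2_natr m : m%:R = (odd m)%:R :> 'F_2.
Proof. by rewrite -modn2 (Fp_nat_mod (isT : prime 2)). Qed.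

Lemma F2_addrr (a : 'F_2) : a + a = 0.
Proof. exact/addrr_pchar2/(pchar_Fp (isT : prime 2)). Qed.

Lemma wtE n (u : 'rV['F_2]_n) : wt u = (\sum_i (u 0%R i != 0%R))%N.
Proof. by rewrite /wt -sum1_card big_mkcond; apply: eq_bigr => i _; rewrite inE. Qed.

Lemma wt0 n : wt (0 : 'rV['F_2]_n) = 0%N.
Proof. by rewrite wtE big1 // => i _; rewrite mxE eqxx. Qed.

Lemma wt_row_mx m n (x : 'rV['F_2]_m) (y : 'rV['F_2]_n) :
  wt (row_mx x y) = (wt x + wt y)%N.
Proof.
by rewrite !wtE big_split_ord; congr addn; apply: eq_bigr => i _;
  rewrite ?row_mxEl ?row_mxEr.
Qed.

Section Weight.
Variable n : nat.
Implicit Types u : 'rV['F_2]_n.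

Lemma wt_addr_const1 u : (wt u + wt (u + const_mx 1%R))%N = n.
Proof.
rewrite !wtE -big_split /= -[RHS]card_ord -sum1_card; apply: eq_bigr => i _.
by rewrite !mxE; case: (F2_cases (u 0 i)) => ->;
  rewrite ?add0r ?F2_addrr ?eqxx ?oner_eq0.
Qed.

Lemma wt_const1 : wt (const_mx 1 : 'rV['F_2]_n) = n.
Proof. by rewrite -[RHS](wt_addr_const1 0) wt0 add0r. Qed.

End Weight.

Lemma const1_neq0 n : (0 < n)%N -> const_mx 1 != 0 :> 'rV['F_2]_n.
Proof.
by case: n => // n _; apply/eqP => /rowP/(_ ord0)/eqP; rewrite !mxE oner_eq0.
Qed.

Lemma dim_rep_code n : \dim (rep_code n) = (0 < n)%N.
Proof.
by rewrite dim_vline; case: n => [|n]; rewrite ?thinmx0 ?eqxx ?const1_neq0.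
Qed.

Lemma min_dist_gt0 n (C : {vspace 'rV['F_2]_n}) d : min_dist C d -> (0 < n)%N.
Proof. by case: n C => // C [[c [_ /negP[]]]]; rewrite thinmx0. Qed.

Lemma edot_row_mx m n (x1 y1 : 'rV['F_2]_m) (x2 y2 : 'rV['F_2]_n) :
  edot (row_mx x1 x2) (row_mx y1 y2) = edot x1 y1 + edot x2 y2.
Proof.
by rewrite /edot big_split_ord; congr (_ + _); apply: eq_bigr => i _;
  rewrite ?row_mxEl ?row_mxEr.
Qed.

Section InnerProduct.
Variable n : nat.
Implicit Types x y z : 'rV['F_2]_n.

Lemma edotE x y : edot x y = (x *m y^T) 0 0.
Proof. by rewrite mxE; apply: eq_bigr => i _; rewrite mxE. Qed.

Lemma edotC x y : edot x y = edot y x.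
Proof. by apply: eq_bigr => i _; rewrite mulrC. Qed.

Lemma edotDl x y z : edot (x + y) z = edot x z + edot y z.
Proof. by rewrite !edotE mulmxDl mxE. Qed.

Lemma edotDr x y z : edot x (y + z) = edot x y + edot x z.
Proof. by rewrite !(edotC x) edotDl. Qed.

Lemma edotZl c x y : edot (c *: x) y = c * edot x y.
Proof. by rewrite !edotE -scalemxAl mxE. Qed.

Lemma edotZr c x y : edot x (c *: y) = c * edot x y.
Proof. by rewrite !(edotC x) edotZl. Qed.

Lemma edot0r x : edot x 0 = 0.
Proof. by rewrite /edot big1 // => i _; rewrite mxE mulr0. Qed.

Lemma edot0l x : edot 0 x = 0.
Proof. by rewrite edotC edot0r. Qed.

Lemma edot_const1r x : edot x (const_mx 1) = (wt x)%:R.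
Proof.
rewrite /edot wtE natr_sum; apply: eq_bigr => i _; rewrite mxE mulr1.
by case: (F2_cases (x 0 i)) => ->; rewrite ?eqxx ?oner_eq0.
Qed.

Lemma mem_edualP (C : {vspace 'rV['F_2]_n}) x :
  reflect (forall y, y \in C -> edot x y = 0) (x \in edual C).
Proof.
apply: (iffP idP) => [Ex y Cy | x_perp]; last first.
  apply: memv_span; rewrite mem_enum inE.
  by apply/forallP => y; apply/implyP => /x_perp ->.
have : (edual C <= lker (linfun (mulmxr y^T)))%VS.
  apply/span_subvP => z; rewrite mem_enum inE => /forallP/(_ y); rewrite Cy /=.
  move=> /eqP z_perp; rewrite memv_ker lfunE /=.
  by apply/eqP/rowP => i; rewrite ord1 -edotE z_perp mxE.
move/subvP/(_ x Ex); rewrite memv_ker lfunE /= => /eqP xy0.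
by rewrite edotE xy0 mxE.
Qed.

End InnerProduct.

Section PlotkinRepetition.
Variables (n : nat) (C1 : {vspace 'rV['F_2]_n}).
Local Notation C := (plotkin_sum C1 (rep_code n)).
Local Notation e := (row_mx 0 (const_mx 1) : 'rV['F_2]_(n + n)).

Lemma mem_plotkin_rep w :
  reflect (exists u c, u \in C1 /\ w = row_mx u u + c *: e) (w \in C).
Proof.
rewrite /plotkin_sum /rep_code limg_line rshift_lfunE.
apply: (iffP memv_addP) => [|[u [c [C1u ->]]]].
  case=> _ /memv_imgP[u C1u ->] [_ /vlineP[c ->] ->].
  by exists u, c; rewrite dup_lfunE.
exists (dup_lfun u); first exact: memv_img.
by exists (c *: e); [apply/vlineP; exists c | rewrite dup_lfunE].
Qed.

Lemma e_in_plotkin_rep : e \in C.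
Proof.
by apply/mem_plotkin_rep; exists 0, 1; rewrite mem0v row_mx0 add0r scale1r.
Qed.

Lemma wt_dup_add_e u : wt (row_mx u u + e) = n.
Proof. by rewrite add_row_mx addr0 wt_row_mx wt_addr_const1. Qed.

Lemma even_like_plotkin_rep : even_like C <-> ~~ odd n.
Proof.
split=> [evC | even_n w /mem_plotkin_rep[u [c [_ ->]]]].
  by have := evC e e_in_plotkin_rep; rewrite wt_row_mx wt0 wt_const1.
have [->|->] := F2_cases c; last by rewrite scale1r wt_dup_add_e.
by rewrite scale0r addr0 wt_row_mx addnn odd_double.
Qed.

Lemma min_dist_plotkin_rep d1 :
  min_dist C1 d1 -> min_dist C (minn (2 * d1) n).
Proof.
move=> dist_C1; have n_gt0 := min_dist_gt0 dist_C1.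
case: dist_C1 => [[c1 [C1c1 c1_nz wt_c1]] min_wt_C1]; split.
  have [le_2d1_n | lt_n_2d1] := leqP (2 * d1) n.
    exists (row_mx c1 c1); split.
    - by apply/mem_plotkin_rep; exists c1, 0; rewrite scale0r addr0.
    - by rewrite row_mx_eq0 (negPf c1_nz).
    - by rewrite wt_row_mx wt_c1 addnn -mul2n.
  exists e; split.
  - exact: e_in_plotkin_rep.
  - by rewrite row_mx_eq0 eqxx const1_neq0.
  - by rewrite wt_row_mx wt0 wt_const1.
move=> _ /mem_plotkin_rep[u [c [C1u ->]]]; have [->|->] := F2_cases c.
  rewrite scale0r addr0 row_mx_eq0 andbb => u_nz.
  apply: leq_trans (geq_minl _ n) _.
  by rewrite wt_row_mx addnn -mul2n leq_mul2l (min_wt_C1 u C1u u_nz) orbT.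
by rewrite scale1r wt_dup_add_e geq_minr.
Qed.

Hypothesis even_C1 : even_like C1.

Lemma edot_plotkin_rep u u' c c' : u \in C1 -> u' \in C1 ->
  edot (row_mx u u + c *: e) (row_mx u' u' + c' *: e) = c * c' * n%:R.
Proof.
have wt_even x : x \in C1 -> (wt x)%:R = 0 :> 'F_2.
  by move/even_C1; rewrite F2_natr => /negPf->.
move=> /wt_even wt_u /wt_even wt_u'.
rewrite edotDl !edotDr !edotZl !edotZr !edot_row_mx F2_addrr !edot0l !edot0r.
rewrite (edotC (const_mx 1)) !edot_const1r wt_u wt_u' wt_const1.
by rewrite !add0r !mulr0 !add0r mulrA.
Qed.

Lemma ehull_plotkin_rep_odd : odd n -> ehull C = (dup_lfun @: C1)%VS.
Proof.
move=> odd_n; apply/vspaceP => w.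
apply/memv_capP/idP => [[]|/memv_imgP[u C1u ->]].
  case/mem_plotkin_rep=> u [c [C1u ->]] /mem_edualP w_perp.
  have e_in_C : row_mx 0 0 + 1 *: e \in C.
    by rewrite row_mx0 add0r scale1r e_in_plotkin_rep.
  have := w_perp _ e_in_C.
  rewrite edot_plotkin_rep ?mem0v // F2_natr odd_n !mulr1 => ->.
  by rewrite scale0r addr0 -dup_lfunE memv_img.
have -> : dup_lfun u = row_mx u u + 0 *: e by rewrite dup_lfunE scale0r addr0.
split; first by apply/mem_plotkin_rep; exists u, 0.
apply/mem_edualP => _ /mem_plotkin_rep[u' [c' [C1u' ->]]].
by rewrite edot_plotkin_rep // !mul0r.
Qed.

Lemma ehull_plotkin_rep_even : ~~ odd n -> ehull C = C.
Proof.
move=> even_n; apply/capv_idPl/subvP => _ /mem_plotkin_rep[u [c [C1u ->]]].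
apply/mem_edualP => _ /mem_plotkin_rep[u' [c' [C1u' ->]]].
by rewrite edot_plotkin_rep // F2_natr (negPf even_n) mulr0.
Qed.

End PlotkinRepetition.

Theorem corollary4 (n k1 d1 : nat) (C1 : {vspace 'rV['F_2]_n})
    (C : {vspace 'rV['F_2]_(n + n)}) :
  even_like C1 -> is_code C1 k1 d1 ->
  (forall w, w \in C <->
     exists u v, [/\ u \in C1, v \in rep_code n & w = row_mx u (u + v)]) ->
  ((is_code C (k1 + 1) (minn (2 * d1) n) /\ odd_like C) <-> almost_self_orth C) /\
  ((is_code C (k1 + 1) (minn (2 * d1) n) /\ even_like C) <-> self_orth C).
Proof.
move=> even_C1 [dim_C1 dist_C1] memC.
have -> : C = plotkin_sum C1 (rep_code n).
  by apply/vspaceP => w; apply/idP/mem_plotkin_sum => /memC.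
have dim_C : \dim (plotkin_sum C1 (rep_code n)) = (k1 + 1)%N.
  by rewrite dim_plotkin_sum dim_rep_code (min_dist_gt0 dist_C1) dim_C1.
have code_C : is_code (plotkin_sum C1 (rep_code n)) (k1 + 1) (minn (2 * d1) n).
  exact: conj dim_C (min_dist_plotkin_rep dist_C1).
have even_C := even_like_plotkin_rep C1.
rewrite /almost_self_orth /self_orth.
have [odd_n | even_n] := boolP (odd n).
  rewrite ehull_plotkin_rep_odd // dim_limg_dup dim_C1 dim_C addnK; split; split.
  - by [].
  - by split=> // /even_C; rewrite odd_n.
  - by case=> _ /even_C; rewrite odd_n.
  - by move/eqP; rewrite -{1}[k1]addn0 eqn_add2l.
rewrite ehull_plotkin_rep_even //; split; split.
- by case=> _ []; apply/even_C.
- by rewrite dim_C addnK => /eqP; rewrite -{2}[k1]addn0 eqn_add2l.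
- by [].
- by split=> //; apply/even_C.
Qed.
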